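(* Let $a$ be a nonnegative measurable function on $\mathbb{R}_+$ with $a\in L_{\infty,loc}([0,\infty))$, and let $b$ be a nonnegative measurable function on $\mathbb{R}_+^2$ such that for a.e. $y>0$, $\int_0^y x\, b(x,y)\,\mathrm{d}x = y$ and $b(x,y)=0$ for a.e. $x>y$. Assume there are $l\ge 0$ and $b_0\ge 0$ such that $n_0(x)=\int_0^x b(y,x)\,\mathrm{d}y\le b_0(1+x^l)$ for all $x\in\mathbb{R}_+$. Let $m\ge 1$ with $m\geq l$. If $f\ge 0$ and $f\in D(A_{0,m})$, then $$\|\mathcal{B}f\|_{[0,m]}=\int_0^\infty a(y)\big(n_m(y)+n_0(y)\big)f(y)\,\mathrm{d}y<\infty,$$ where $(\mathcal{B}f)(x)=\int_x^\infty a(y)b(x,y)f(y)\,\mathrm{d}y$.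
   Context: For $m\ge0$, $n_m(y)=\int_0^y b(x,y)x^m\,\mathrm{d}x$. $X_{0,m}=L_1(\mathbb{R}_+,(1+x^m)\,\mathrm{d}x)$ with norm $\|f\|_{[0,m]}=\int_0^\infty |f(x)|(1+x^m)\,\mathrm{d}x$. $D(A_{0,m})=\{f\in X_{0,m}: af\in X_{0,m}\}$. *)

From HB Require Import structures.
From mathcomp Require Import all_boot all_order all_algebra.
From mathcomp Require Import all_classical all_reals all_analysis.
Set Implicit Arguments. Unset Strict Implicit. Unset Printing Implicit Defensive.
Import Order.TTheory GRing.Theory Num.Theory.
Import numFieldNormedType.Exports.
Local Open Scope classical_set_scope.
Local Open Scope ring_scope.
Local Open Scope ereal_scope.

(* R_+ is taken as [0, +oo); all integrals are Lebesgue integrals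
   (extended-real valued) w.r.t. Lebesgue measure on R. *)
Section Defs.
Variable R : realType.
Notation mu := (@lebesgue_measure R).

Definition nmom (b : R -> R -> R) (m : R) (y : R) : \bar R :=
  \int[mu]_(x in `[0%R, y]) (b x y * x `^ m)%:E.

Definition Bop (a : R -> R) (b : R -> R -> R) (f : R -> R) (x : R) : \bar R :=
  \int[mu]_(y in `]x, +oo[) (a y * b x y * f y)%:E.

Definition norm0m (m : R) (g : R -> \bar R) : \bar R :=
  \int[mu]_(x in `[0%R, +oo[) (`|g x| * (1 + x `^ m)%:E).

Definition inX0m (m : R) (f : R -> R) : Prop :=
  measurable_fun (`[0%R, +oo[ : set R) f /\ norm0m m (fun x => (f x)%:E) < +oo.

Definition inDA0m (a : R -> R) (m : R) (f : R -> R) : Prop :=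
  inX0m m f /\ inX0m m (fun x => (a x * f x)%R).
End Defs.

From HB Require Import structures.
From mathcomp Require Import all_boot all_order all_algebra.
From mathcomp Require Import all_classical all_reals all_analysis.
From mathcomp Require Import measurable_realfun ring lra.
Import Order.TTheory GRing.Theory Num.Theory.
Import numFieldNormedType.Exports.
Local Open Scope classical_set_scope.
Local Open Scope ring_scope.
Local Open Scope ereal_scope.

(* Writing the weighted norm of Bf as the integral of
   a(y) b(x,y) f(y) (1 + x^m) over the triangle 0 <= x <= y and exchanging
   the order of integration (Tonelli) gives the identity.  For finiteness:
   on [0, y] one has x^m <= x y^(m-1), so the mass conservation
   int_0^y x b(x,y) dx = y gives n_m(y) <= y^m, while
   n_0(y) <= b0 (1 + y^l) <= b0 (2 + y^m) because l <= m.  Hence the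
   integrand is at most (2 b0 + 1) a(y) f(y) (1 + y^m), whose integral is
   finite since af lies in X_{0,m}. *)

Section measurable_setX_section.
Context {d1 d2 d3 : measure_display} {T1 : measurableType d1}
  {T2 : measurableType d2} {T3 : measurableType d3}.
Context {A : set T1} {B : set T2} {f : T1 * T2 -> T3}.
Hypotheses (mA : measurable A) (mB : measurable B).
Hypothesis mf : measurable_fun (A `*` B) f.

Lemma measurable_fun_setX_pair1 y : B y -> measurable_fun A (fun x => f (x, y)).
Proof.
move=> By; apply: (measurable_comp (measurableX mA mB) _ mf).
- by move=> _ [x Ax <-].
- exact: measurable_funTS.
Qed.

Lemma measurable_fun_setX_pair2 x : A x -> measurable_fun B (fun y => f (x, y)).
Proof.
move=> Ax; apply: (measurable_comp (measurableX mA mB) _ mf).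
- by move=> _ [y By <-].
- exact: measurable_funTS.
Qed.

End measurable_setX_section.

Local Notation Rpos := (`[0%R, +oo[%classic : set (Real.sort _)).

Section half_line.
Context {R : realType}.
Local Notation mu := (@lebesgue_measure R).

Lemma in_Rpos (x : R) : Rpos x = (0 <= x)%R.
Proof. by rewrite /= in_itv /= andbT. Qed.

Lemma measurable_Rpos : measurable (Rpos : set R).
Proof. exact: measurable_itv. Qed.

Lemma integral_Rpos_supported (h : R -> \bar R) :
  (forall x, (x < 0)%R -> h x = 0) ->
  \int[mu]_(x in Rpos) h x = \int[mu]_x h x.
Proof.
move=> h0; rewrite integral_mkcond; apply: eq_integral => x _.
rewrite patchE; case: ifPn => // /negP; rewrite inE in_Rpos => /negP.
by rewrite -ltNge => /h0.
Qed.

Definition triangle : set (R * R) := [set p | (0 <= p.1 <= p.2)%R].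

Lemma measurable_triangle : measurable triangle.
Proof.
have -> : triangle = fst @^-1` Rpos `&` (fun p => p.2 - p.1)%R @^-1` Rpos.
  apply/seteqP; split => -[x y]; rewrite /triangle /= !in_itv /= !andbT subr_ge0.
    by move=> /andP.
  by move=> [-> ->].
apply: measurableI; first by rewrite -[X in measurable X]setTI; exact: measurable_fst.
rewrite -[X in measurable X]setTI.
by apply: (measurable_funB measurable_snd measurable_fst) => //; exact: measurable_Rpos.
Qed.

Lemma triangle_sub_Rpos2 : triangle `<=` Rpos `*` Rpos.
Proof. by move=> [x y] /andP[x0 xy]; split; rewrite in_Rpos //; exact: le_trans xy. Qed.

Lemma ge0_norm0mE m (g : R -> R) : (forall x, (0 <= x)%R -> (0 <= g x)%R) ->
  norm0m m (fun x => (g x)%:E) = \int[mu]_(x in Rpos) (g x * (1 + x `^ m))%:E.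
Proof.
move=> g_ge0; apply: eq_integral => x; rewrite inE in_Rpos => x0.
by rewrite gee0_abs ?lee_fin ?g_ge0.
Qed.

Section swap.
Variable F : R * R -> \bar R.
Hypothesis mF : measurable_fun (Rpos `*` Rpos) F.
Hypothesis F_ge0 : forall x y, (0 <= x <= y)%R -> 0 <= F (x, y).

Let G := F \_ triangle.

Let measurable_G : measurable_fun setT G.
Proof.
apply/(measurable_restrictT _ measurable_triangle).
exact: measurable_funS (measurableX measurable_Rpos measurable_Rpos) triangle_sub_Rpos2 mF.
Qed.

Let G_ge0 p : 0 <= G p.
Proof. by rewrite /G patchE; case: ifPn => // /set_mem; case: p => x y /F_ge0. Qed.

Let integral_G_xsection x : (0 <= x)%R ->
  \int[mu]_y G (x, y) = \int[mu]_(y in `[x, +oo[) F (x, y).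
Proof.
move=> x0; rewrite [RHS]integral_mkcond; apply: eq_integral => y _.
rewrite /G !patchE; congr (if _ then _ else _).
by apply/idP/idP; rewrite !inE /triangle /= in_itv /= x0 andbT.
Qed.

Let integral_G_ysection y :
  \int[mu]_x G (x, y) = \int[mu]_(x in `[0%R, y]) F (x, y).
Proof.
rewrite [RHS]integral_mkcond; apply: eq_integral => x _.
by rewrite /G !patchE.
Qed.

Lemma measurable_integral_triangle :
  measurable_fun Rpos (fun y => \int[mu]_(x in `[0%R, y]) F (x, y)).
Proof.
apply: measurable_funTS.
rewrite (_ : (fun y => _) = fubini_G mu G); last first.
  by apply/funext => y; rewrite /fubini_G integral_G_ysection.
exact: measurable_fun_fubini_tonelli_G.
Qed.

Lemma integral_triangle_swap :
  \int[mu]_(x in Rpos) \int[mu]_(y in `[x, +oo[) F (x, y) =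
  \int[mu]_(y in Rpos) \int[mu]_(x in `[0%R, y]) F (x, y).
Proof.
have G_eq0 x y : (x < 0)%R \/ (y < 0)%R -> G (x, y) = 0.
  move=> xy0; rewrite /G patchE memNset //= => /andP[x0 xy].
  by case: xy0; apply/negP; rewrite -leNgt // (le_trans x0 xy).
transitivity (\int[mu]_x \int[mu]_y G (x, y)).
  rewrite -integral_Rpos_supported; last first.
    by move=> x x0; apply: integral0_eq => y _; apply: G_eq0; left.
  by apply: eq_integral => x; rewrite inE in_Rpos => /integral_G_xsection.
rewrite fubini_tonelli //.
rewrite -integral_Rpos_supported; last first.
  by move=> y y0; apply: integral0_eq => x _; apply: G_eq0; right.
by apply: eq_integral => y _; rewrite integral_G_ysection.
Qed.
End swap.

Section moments.
Context {b : R -> R -> R}.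
Hypothesis mb : measurable_fun (Rpos `*` Rpos) (fun p => b p.1 p.2).
Hypothesis b_ge0 : forall x y, (0 <= x)%R -> (0 <= y)%R -> (0 <= b x y)%R.

Lemma nmom_integrand_ge0 (r y x : R) :
  `[0%R, y]%classic x -> 0 <= (b x y * x `^ r)%:E.
Proof.
rewrite /= in_itv /= => /andP[x0 xy].
by rewrite lee_fin mulr_ge0 ?powR_ge0 ?b_ge0 // (le_trans x0 xy).
Qed.

Lemma nmom_ge0 r y : 0 <= nmom b r y.
Proof. exact/integral_ge0/nmom_integrand_ge0. Qed.

Lemma measurable_nmom_integrand (r : R) {y : R} : (0 <= y)%R ->
  measurable_fun `[0%R, y] (fun x => (b x y * x `^ r)%:E).
Proof.
move=> y0; apply/measurable_EFinP/measurable_funM; last first.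
  exact: measurable_funTS (measurable_powR r).
apply: (measurable_funS measurable_Rpos); last first.
  have := measurable_fun_setX_pair1 measurable_Rpos measurable_Rpos mb.
  by apply; rewrite in_Rpos.
by move=> x; rewrite in_Rpos /= in_itv /= => /andP[].
Qed.

Lemma measurable_nmom r : measurable_fun Rpos (nmom b r).
Proof.
apply: (measurable_integral_triangle (fun p => (b p.1 p.2 * p.1 `^ r)%:E)).
  apply/measurable_EFinP/measurable_funM => //.
  apply: measurable_funTS; exact: measurableT_comp (measurable_powR r) measurable_fst.
by move=> x y xy; apply: nmom_integrand_ge0; rewrite /= in_itv.
Qed.

Lemma nmom_le_powR (m y : R) : (1 <= m)%R -> (0 <= y)%R ->
  \int[mu]_(x in `[0%R, y]) (x * b x y)%:E = y%:E -> nmom b m y <= (y `^ m)%:E.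
Proof.
move=> m1 y0 first_moment; have m0 : (0 < m)%R by exact: lt_le_trans m1.
have mxb : measurable_fun `[0%R, y] (fun x => (x * b x y)%:E).
  have := measurable_nmom_integrand 1%R y0.
  apply: eq_measurable_fun => x; rewrite inE /= in_itv /= => /andP[x0 _].
  by rewrite powRr1 // mulrC.
rewrite -(mulr_powRB1 y0 m0) EFinM -first_moment -ge0_integralZr //; last 2 first.
  - by move=> x; rewrite /= in_itv /= => /andP[x0 _]; rewrite lee_fin mulr_ge0 ?b_ge0.
  - by rewrite lee_fin powR_ge0.
apply: ge0_le_integral => //.
- exact: nmom_integrand_ge0.
- exact: measurable_nmom_integrand.
- exact: emeasurable_funM.
move=> x; rewrite /= in_itv /= => /andP[x0 xy].
have bxy0 : (0 <= b x y)%R by rewrite b_ge0 // (le_trans x0 xy).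
rewrite -EFinM lee_fin -[(x `^ m)%R](mulr_powRB1 x0 m0) mulrA [(b x y * x)%R]mulrC.
rewrite ler_wpM2l //.
- by rewrite mulr_ge0.
- by rewrite ge0_ler_powR ?subr_ge0 ?nnegrE // (le_trans x0 xy).
Qed.

Lemma nmomD_le {l b0 m y : R} : (0 <= l)%R -> (l <= m)%R -> (1 <= m)%R ->
  (0 <= b0)%R -> (0 <= y)%R ->
  ((0 < y)%R -> \int[mu]_(x in `[0%R, y]) (x * b x y)%:E = y%:E) ->
  nmom b 0 y <= (b0 * (1 + y `^ l))%:E ->
  nmom b m y + nmom b 0 y <= ((2 * b0 + 1) * (1 + y `^ m))%:E.
Proof.
move=> l0 lm m1 b00 y0 first_moment n0_le.
have n_m_le : nmom b m y <= (y `^ m)%:E.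
  apply: nmom_le_powR => //; move: y0; rewrite le_eqVlt => /predU1P[<-|/first_moment //].
  by rewrite set_itv1 integral_set1.
have yl_le : (y `^ l <= 1 + y `^ m)%R.
  have [y1|y1] := leP y 1%R.
    apply: (@le_trans _ _ (1 `^ l)%R); first by rewrite ge0_ler_powR ?nnegrE.
    by rewrite powR1 /= lerDl powR_ge0.
  apply: (@le_trans _ _ (y `^ m)%R); first by apply: ler_powR => //; exact: ltW.
  by rewrite lerDr.
apply: (le_trans (leeD n_m_le n0_le)); rewrite -EFinD lee_fin.
have := powR_ge0 y m; nra.
Qed.

End moments.

Section fragmentation_norm.
Context {a f : R -> R} {b : R -> R -> R} (m : R).
Hypotheses (ma : measurable_fun Rpos a) (mf : measurable_fun Rpos f).
Hypothesis mb : measurable_fun (Rpos `*` Rpos) (fun p => b p.1 p.2).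
Hypothesis a_ge0 : forall x, (0 <= x)%R -> (0 <= a x)%R.
Hypothesis b_ge0 : forall x y, (0 <= x)%R -> (0 <= y)%R -> (0 <= b x y)%R.
Hypothesis f_ge0 : forall x, (0 <= x)%R -> (0 <= f x)%R.

Let H (p : R * R) := (a p.2 * b p.1 p.2 * f p.2 * (1 + p.1 `^ m))%:E.

Let measurable_H : measurable_fun (Rpos `*` Rpos) H.
Proof.
have mRpos2 := measurableX measurable_Rpos measurable_Rpos.
have msnd (g : R -> R) : measurable_fun Rpos g ->
    measurable_fun (Rpos `*` Rpos) (fun p => g p.2).
  move=> mg; apply: (measurable_comp measurable_Rpos _ mg); first by move=> _ [[x y] [_ ?] <-].
  exact: measurable_funTS.
apply/measurable_EFinP.
apply: measurable_funM; [apply: measurable_funM; [apply: measurable_funM|]|].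
- exact: msnd.
- exact: mb.
- exact: msnd.
- apply: measurable_funTS; apply: measurable_funD => //.
  exact: measurableT_comp (measurable_powR m) measurable_fst.
Qed.

Let H_ge0 x y : (0 <= x <= y)%R -> 0 <= H (x, y).
Proof.
move=> /andP[x0 xy]; have y0 := le_trans x0 xy.
by rewrite lee_fin !mulr_ge0 ?a_ge0 ?b_ge0 ?f_ge0 // addr_ge0 // powR_ge0.
Qed.

Let weighted_Bop x : (0 <= x)%R ->
  `|Bop a b f x| * (1 + x `^ m)%:E = \int[mu]_(y in `[x, +oo[) H (x, y).
Proof.
move=> x0.
have mF : measurable_fun `[x, +oo[ (fun y => (a y * b x y * f y)%:E).
  apply: (measurable_funS measurable_Rpos).
    by move=> y; rewrite in_Rpos /= in_itv /= andbT; exact: le_trans.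
  apply/measurable_EFinP/measurable_funM => //; apply: measurable_funM => //.
  have := measurable_fun_setX_pair2 measurable_Rpos measurable_Rpos mb.
  by apply; rewrite in_Rpos.
have F_ge0 y : `[x, +oo[%classic y -> 0 <= (a y * b x y * f y)%:E.
  rewrite /= in_itv /= andbT => xy; have y0 := le_trans x0 xy.
  by rewrite lee_fin !mulr_ge0 ?a_ge0 ?b_ge0 ?f_ge0.
have oc_sub : `]x, +oo[ `<=` `[x, +oo[.
  by move=> y; rewrite /= !in_itv /= !andbT => /ltW.
rewrite /Bop integral_itv_obnd_cbnd; last exact: measurable_funS mF.
rewrite gee0_abs; last exact: integral_ge0.
by rewrite -ge0_integralZr // lee_fin addr_ge0 ?powR_ge0.
Qed.

Let weighted_moments y : (0 <= y)%R ->
  (a y)%:E * (nmom b m y + nmom b 0%R y) * (f y)%:E =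
  \int[mu]_(x in `[0%R, y]) H (x, y).
Proof.
move=> y0.
have mm := measurable_nmom_integrand mb m y0.
have m0 := measurable_nmom_integrand mb 0%R y0.
have gm := nmom_integrand_ge0 b_ge0 m y; have g0 := nmom_integrand_ge0 b_ge0 0%R y.
rewrite /nmom -ge0_integralD //.
rewrite muleAC -EFinM -ge0_integralZl_EFin //; first last.
- by rewrite mulr_ge0 ?a_ge0 ?f_ge0.
- by apply: emeasurable_funD; exact: measurable_nmom_integrand.
- by move=> x Sx; rewrite adde_ge0 ?nmom_integrand_ge0.
apply: eq_integral => x _; rewrite -EFinD -EFinM powRr0 /H.
by congr EFin; ring.
Qed.

Let measurable_weighted_moments :
  measurable_fun Rpos (fun y => (a y)%:E * (nmom b m y + nmom b 0%R y) * (f y)%:E).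
Proof.
apply: (@emeasurable_funM _ _ _ _ (fun y => (a y)%:E * _) (fun y => (f y)%:E)).
  apply: emeasurable_funM; first exact/measurable_EFinP.
  by apply: emeasurable_funD; exact: measurable_nmom.
exact/measurable_EFinP.
Qed.

Lemma norm0m_Bop : norm0m m (Bop a b f) =
  \int[mu]_(y in Rpos) ((a y)%:E * (nmom b m y + nmom b 0%R y) * (f y)%:E).
Proof.
transitivity (\int[mu]_(x in Rpos) \int[mu]_(y in `[x, +oo[) H (x, y)).
  by apply: eq_integral => x; rewrite inE in_Rpos => /weighted_Bop.
rewrite integral_triangle_swap //.
by apply: eq_integral => y; rewrite inE in_Rpos => /weighted_moments.
Qed.

Lemma norm0m_Bop_le (K : R) : (0 <= K)%R ->
  {ae mu, forall y, (0 <= y)%R -> nmom b m y + nmom b 0%R y <= (K * (1 + y `^ m))%:E} ->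
  norm0m m (Bop a b f) <= K%:E * norm0m m (fun y => (a y * f y)%:E).
Proof.
move=> K_ge0 moments_le.
have af_ge0 y : (0 <= y)%R -> (0 <= a y * f y)%R by move=> y0; rewrite mulr_ge0 ?a_ge0 ?f_ge0.
have g_ge0 y : Rpos y -> 0 <= (a y * f y * (1 + y `^ m))%:E.
  by rewrite in_Rpos => y0; rewrite lee_fin mulr_ge0 ?af_ge0 // addr_ge0 ?powR_ge0.
have mg : measurable_fun Rpos (fun y => (a y * f y * (1 + y `^ m))%:E).
  apply/measurable_EFinP; apply: measurable_funM; first exact: measurable_funM.
  by apply: measurable_funTS; apply: measurable_funD => //; exact: measurable_powR.
rewrite norm0m_Bop (ge0_norm0mE m (fun y => a y * f y)%R af_ge0) -ge0_integralZl_EFin //.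
apply: (@ae_ge0_le_integral _ _ _ mu _ measurable_Rpos).
- move=> y; rewrite in_Rpos => y0; rewrite muleAC -EFinM.
  by apply: mule_ge0; [rewrite lee_fin af_ge0|rewrite adde_ge0 ?nmom_ge0].
- exact: measurable_weighted_moments.
- by move=> y /g_ge0; apply: mule_ge0.
- exact: measurable_funeM.
apply: (filterS _ moments_le); first exact: (ae_filter_ringOfSetsType mu).
move=> y moments_le_y; rewrite in_Rpos => y0.
rewrite muleAC -EFinM; apply: le_trans (lee_wpmul2l _ (moments_le_y y0)) _.
  by rewrite lee_fin af_ge0.
by rewrite -!EFinM lee_fin mulrCA.
Qed.

End fragmentation_norm.
End half_line.

Theorem lemma2p1 (R : realType) (a : R -> R) (b : R -> R -> R) (l b0 m : R)
  (f : R -> R) :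
  measurable_fun (`[0%R, +oo[ : set R) a ->
  (forall x, (0 <= x)%R -> (0 <= a x)%R) ->
  (forall K : R, (0 < K)%R -> exists C : R,
     {ae (@lebesgue_measure R), forall x, `[0%R, K]%classic x -> (`|a x| <= C)%R}) ->
  measurable_fun ((`[0%R, +oo[ : set R) `*` (`[0%R, +oo[ : set R)) (fun p : R * R => b p.1 p.2) ->
  (forall x y, (0 <= x)%R -> (0 <= y)%R -> (0 <= b x y)%R) ->
  {ae (@lebesgue_measure R), forall y, (0 < y)%R ->
     \int[@lebesgue_measure R]_(x in `[0%R, y]) (x * b x y)%:E = y%:E /\
     {ae (@lebesgue_measure R), forall x, (y < x)%R -> b x y = 0%R}} ->
  (0 <= l)%R -> (0 <= b0)%R ->
  (forall x, (0 <= x)%R -> nmom b 0 x <= (b0 * (1 + x `^ l))%:E) ->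
  (1 <= m)%R -> (l <= m)%R ->
  (forall x, (0 <= x)%R -> (0 <= f x)%R) ->
  inDA0m a m f ->
  norm0m m (Bop a b f) =
    \int[@lebesgue_measure R]_(y in `[0%R, +oo[)
       ((a y)%:E * (nmom b m y + nmom b 0 y) * (f y)%:E)
  /\ norm0m m (Bop a b f) < +oo.
Proof.
move=> ma a_ge0 _ mb b_ge0 first_moment l0 b00 n0_le m1 lm f_ge0 [[mf _] [_ af_fin]].
split; first exact: norm0m_Bop.
apply: le_lt_trans (norm0m_Bop_le m ma mf mb a_ge0 b_ge0 f_ge0 (2 * b0 + 1)%R _ _) _.
- by rewrite addr_ge0 ?mulr_ge0.
- apply: (filterS _ first_moment); first exact: (ae_filter_ringOfSetsType lebesgue_measure).
  move=> y first_moment_y y0.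
  apply: (nmomD_le mb b_ge0 l0 lm m1 b00 y0 _ (n0_le y y0)).
  by case/first_moment_y.
- by apply: lte_mul_pinfty; rewrite // lee_fin addr_ge0 ?mulr_ge0.
Qed.
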